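(* A graph $G$ is degree-perfect if and only if $G$ has no induced subgraph isomorphic to a cycle of length other than $4$ (equivalently, $G$ is bipartite and every induced cycle of $G$ is a $4$-cycle).
   Context: All graphs are finite and simple. The biclique number $\tau(H)$ is the largest $t$ such that $H$ has a (not necessarily induced) subgraph isomorphic to $K_{t,t}$, and $\delta(H)$ is the minimum degree. A graph $G$ is degree-perfect if every induced subgraph $H$ of $G$ (with at least one vertex) satisfies $\delta(H)\le \tau(H)$. (It may be used that, by a theorem of Golumbic and Goss, every bipartite graph with at least one edge whose only induced cycles are $4$-cycles has a simplicial edge, i.e. an edge $uv$ such that every vertex of $N(u)$ is adjacent to every vertex of $N(v)$.) *)

(* A finite simple graph is a symmetric irreflexive
   relation e on a finType T; induced subgraphs are given by vertex sets. *)
From mathcomp Require Import all_boot.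
Set Implicit Arguments. Unset Strict Implicit. Unset Printing Implicit Defensive.

Section Graphs.
Variables (T : finType) (e : rel T).

Definition deg_in (S : {set T}) (v : T) : nat := #|[set w in S | e v w]|.

(* minimum degree delta(G[S]) (S nonempty in all uses; every degree <= #|T|) *)
Definition mindeg (S : {set T}) : nat := \big[minn/#|T|]_(v in S) deg_in S v.

Definition is_biclique (S A B : {set T}) : bool :=
  [&& A \subset S, B \subset S, [disjoint A & B], #|A| == #|B|
    & [forall a in A, forall b in B, e a b]].

Definition biclique_number (S : {set T}) : nat :=
  \max_(P : {set T} * {set T} | is_biclique S P.1 P.2) #|P.1|.

Definition degree_perfect : Prop :=
  forall S : {set T}, S != set0 -> mindeg S <= biclique_number S.

Definition cyc_adj (k : nat) (i j : 'I_k) : bool :=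
  (i.+1 %% k == j) || (j.+1 %% k == i).

Definition has_induced_cycle (k : nat) : Prop :=
  exists f : 'I_k -> T, injective f /\
    forall i j : 'I_k, e (f i) (f j) = cyc_adj i j.

End Graphs.

(* An induced cycle C_k with k <> 4 has minimum degree 2 but contains no
   K_{2,2}, so it violates delta <= tau.

   Conversely, assume G has no induced cycle of length other than 4.  Every
   induced subgraph H with an edge then has a bisimplicial edge uv: every
   neighbour of u is adjacent to every neighbour of v (Golumbic-Goss).  Since
   G is triangle-free, N(u) and N(v) are disjoint and span a complete
   bipartite graph, so tau(H) >= min(deg u, deg v) >= delta(H).

   The bisimplicial edge comes from a stronger claim, proved by induction on
   |V|: if some edge avoids the closed neighbourhood of z, then so does some
   bisimplicial edge.  Let C be the component of such an edge among the
   vertices far from z, and S the neighbours of z attached to C.  Shortest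
   paths through C show that any two vertices of S have a common neighbour in
   C, and the absence of induced 6-cycles turns this into a single d in C
   dominating S.  If V has more vertices than C, S and z, recurse on these;
   otherwise recurse after deleting z or d, or take an edge at d. *)

From mathcomp Require Import all_boot zify.
Set Implicit Arguments. Unset Strict Implicit. Unset Printing Implicit Defensive.

Lemma modSn_lt k x : x < k -> x.+1 %% k = if x.+1 == k then 0 else x.+1.
Proof. by move=> xk; case: eqP => [->|?]; rewrite ?modnn // modn_small //; lia. Qed.

Lemma cyc_adjC k (i j : 'I_k) : cyc_adj i j = cyc_adj j i.
Proof. by rewrite /cyc_adj orbC. Qed.

Lemma cyc_adj_irr k (i : 'I_k) : 1 < k -> ~~ cyc_adj i i.
Proof. by rewrite /cyc_adj orbb modSn_lt //; case: ifP; lia. Qed.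

Lemma cyc_adj_lt k (i j : 'I_k) : i < j ->
  cyc_adj i j = (j == i.+1 :> nat) || (i == 0 :> nat) && (j == k.-1 :> nat).
Proof.
move=> ij; have jk := ltn_ord j.
by rewrite /cyc_adj !modSn_lt //; repeat case: ifP; lia.
Qed.

Lemma cyc_adj_ordS k (i : 'I_k) : cyc_adj i (ordS i).
Proof. by rewrite /cyc_adj eqxx. Qed.

Lemma cyc_adj_ord_pred k (i : 'I_k) : cyc_adj i (ord_pred i).
Proof. by apply/orP; right; apply/eqP; exact: (congr1 val (ord_predK i)). Qed.

Lemma ordS_neq_ord_pred k (i : 'I_k) : 2 < k -> ordS i != ord_pred i.
Proof.
move=> k3; rewrite -(inj_eq val_inj) /= modSn_lt //; have ik := ltn_ord i.
have -> : (i + k).-1 %% k = if i == 0 :> nat then k.-1 else i.-1.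
  case: eqP => [->|i0]; first by rewrite add0n modn_small; lia.
  by rewrite (_ : (i + k).-1 = i.-1 + k) ?modnDr ?modn_small; lia.
by repeat case: ifP; lia.
Qed.

Lemma cyc_adj_K22_free k (i1 i2 j1 j2 : 'I_k) : 2 < k -> k != 4 ->
  i1 != i2 -> j1 != j2 ->
  cyc_adj i1 j1 -> cyc_adj i1 j2 -> cyc_adj i2 j1 -> cyc_adj i2 j2 -> False.
Proof.
rewrite /cyc_adj -!(inj_eq val_inj) /= !modSn_lt //.
have := ltn_ord i1; have := ltn_ord i2; have := ltn_ord j1; have := ltn_ord j2.
move: (nat_of_ord i1) (nat_of_ord i2) (nat_of_ord j1) (nat_of_ord j2) => a b c d.
repeat case: ifP; lia.
Qed.

Section InducedCycles.
Variables (T : finType) (e : rel T).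
Hypotheses (e_sym : symmetric e) (e_irr : irreflexive e).

(* In a cycle of length other than 4, distinct vertices have distinct
   neighbourhoods, so injectivity of [f] comes for free. *)
Lemma induced_cycle_of_adj k (f : 'I_k -> T) : 2 < k -> k != 4 ->
  (forall i j : 'I_k, i < j -> e (f i) (f j) = cyc_adj i j) ->
  has_induced_cycle e k.
Proof.
move=> k3 k4 adj_lt.
have adj i j : e (f i) (f j) = cyc_adj i j.
  case: (ltngtP i j) => [/adj_lt //|/adj_lt|/val_inj ->]; first by rewrite e_sym cyc_adjC.
  by rewrite e_irr; apply/esym/negbTE/cyc_adj_irr; lia.
exists f; split=> // i j fij; apply/eqP/negP => /negP ij.
apply: (@cyc_adj_K22_free k i j (ordS i) (ord_pred i)) => //.
- exact: ordS_neq_ord_pred.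
- exact: cyc_adj_ordS.
- exact: cyc_adj_ord_pred.
- by rewrite -adj -fij adj cyc_adj_ordS.
- by rewrite -adj -fij adj cyc_adj_ord_pred.
Qed.

Lemma induced_cycle_of_seq x0 (L : seq T) : 2 < size L -> size L != 4 ->
  (forall i j, i < j < size L -> e (nth x0 L i) (nth x0 L j) =
     (j == i.+1) || (i == 0) && (j == (size L).-1)) ->
  has_induced_cycle e (size L).
Proof.
move=> L3 L4 adj; apply: (@induced_cycle_of_adj _ (fun i => nth x0 L i)) => // i j ij.
by rewrite cyc_adj_lt // adj // ij ltn_ord.
Qed.

Lemma triangle_induced_cycle a b c :
  e a b -> e b c -> e a c -> has_induced_cycle e 3.
Proof.
move=> ab bc ac; apply: (@induced_cycle_of_seq a [:: a; b; c]) => //.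
by move=> i j /andP[]; case: j => [|[|[|j]]] //; case: i => [|[|i]].
Qed.

Lemma hexagon_induced_cycle a0 a1 a2 a3 a4 a5 :
  e a0 a1 -> e a1 a2 -> e a2 a3 -> e a3 a4 -> e a4 a5 -> e a0 a5 ->
  ~~ e a0 a2 -> ~~ e a0 a3 -> ~~ e a0 a4 -> ~~ e a1 a3 -> ~~ e a1 a4 ->
  ~~ e a1 a5 -> ~~ e a2 a4 -> ~~ e a2 a5 -> ~~ e a3 a5 ->
  has_induced_cycle e 6.
Proof.
move=> ? ? ? ? ? ? /negbTE ? /negbTE ? /negbTE ? /negbTE ? /negbTE ?
  /negbTE ? /negbTE ? /negbTE ? /negbTE ?.
apply: (@induced_cycle_of_seq a0 [:: a0; a1; a2; a3; a4; a5]) => //.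
by move=> i j /andP[]; case: j => [|[|[|[|[|[|j]]]]]] //; case: i => [|[|[|[|[|i]]]]].
Qed.

Lemma induced_cycle_of_chordless_path w x0 (q : seq T) : 3 < size q ->
  (forall i j, i < j < size q -> e (nth x0 q i) (nth x0 q j) = (j == i.+1)) ->
  (forall i, i < size q -> e w (nth x0 q i) = (i == 0) || (i == (size q).-1)) ->
  has_induced_cycle e (size q).+1.
Proof.
move=> q3 adj_q adj_w.
apply: (@induced_cycle_of_seq x0 (w :: q)) => /=; [lia | lia |].
by move=> [|i] [|j] //= h; [rewrite adj_w | rewrite adj_q]; lia.
Qed.
End InducedCycles.

(** * Cycles of length other than 4 are not degree-perfect *)

Section CycleIsNotDegreePerfect.
Variables (T : finType) (e : rel T) (k : nat) (f : 'I_k -> T).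
Hypotheses (k3 : 2 < k) (f_inj : injective f).
Hypothesis f_adj : forall i j, e (f i) (f j) = cyc_adj i j.

Lemma cycle_mindeg : 1 < mindeg e [set f i | i : 'I_k].
Proof.
rewrite /mindeg; apply: (big_ind (fun m => 1 < m)).
- by rewrite (leq_trans (ltnW k3)) // -{1}(card_ord k) (leq_card f f_inj).
- by move=> m1 m2 m1_gt1 m2_gt1; rewrite leq_min m1_gt1 m2_gt1.
move=> _ /imsetP[i _ ->]; apply/card_gt1P; exists (f (ordS i)), (f (ord_pred i)).
by rewrite !inE !imset_f // !f_adj cyc_adj_ordS cyc_adj_ord_pred (inj_eq f_inj) ordS_neq_ord_pred.
Qed.

Lemma cycle_biclique_number : k != 4 -> biclique_number e [set f i | i : 'I_k] <= 1.
Proof.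
move=> k4; apply/bigmax_leqP => -[A B] /= /and5P[AS BS _ /eqP AB AB_adj].
have adj a b : a \in A -> b \in B -> e a b.
  by move=> aA bB; move/forall_inP/(_ a aA)/forall_inP: AB_adj; apply.
have preim x : x \in [set f i | i : 'I_k] -> exists i, x = f i.
  by case/imsetP => i _ ->; exists i.
rewrite leqNgt; apply/negP => /card_gt1P[a1 [a2 [a1A a2A a12]]].
have /card_gt1P[b1 [b2 [b1B b2B b12]]] : 1 < #|B|.
  by rewrite -AB; apply/card_gt1P; exists a1, a2.
have [[i1 ?] [i2 ?]] := (preim a1 (subsetP AS _ a1A), preim a2 (subsetP AS _ a2A)).
have [[j1 ?] [j2 ?]] := (preim b1 (subsetP BS _ b1B), preim b2 (subsetP BS _ b2B)).
subst a1 a2 b1 b2; apply: (@cyc_adj_K22_free k i1 i2 j1 j2) => //;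
  by rewrite -?(inj_eq f_inj) -?f_adj ?adj.
Qed.
End CycleIsNotDegreePerfect.

Lemma no_bad_cycle_of_degree_perfect (T : finType) (e : rel T) :
  degree_perfect e -> forall k, 2 < k -> k != 4 -> ~ has_induced_cycle e k.
Proof.
move=> dp k k3 k4 [f [f_inj f_adj]].
have k0 : 0 < k := ltnW (ltnW k3).
have /dp : [set f i | i : 'I_k] != set0 by apply/set0Pn; exists (f (Ordinal k0)); rewrite imset_f.
rewrite leqNgt (leq_ltn_trans (cycle_biclique_number k3 f_inj f_adj k4)) //.
exact: cycle_mindeg.
Qed.

(** * Bisimplicial edges yield large bicliques *)

Lemma bigmin_le (I : eqType) (r : seq I) (P : pred I) (F : I -> nat) idx i :
  i \in r -> P i -> \big[minn/idx]_(j <- r | P j) F j <= F i.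
Proof.
elim: r => //= x r IHr; rewrite inE big_cons => /orP[/eqP <- | ir] Pi.
  by rewrite Pi geq_minl.
by case: ifP => _; rewrite ?geq_min IHr ?orbT.
Qed.

Lemma exists_subset_card (T : finType) (A : {set T}) k : k <= #|A| ->
  exists2 B : {set T}, B \subset A & #|B| = k.
Proof.
move=> kA; exists [set x in take k (enum A)].
  by apply/subsetP => x; rewrite inE => /mem_take; rewrite mem_enum.
rewrite cardsE; move/card_uniqP: (take_uniq k (enum_uniq (mem A))) => ->.
by rewrite size_takel // -cardE.
Qed.

Section Bisimplicial.
Variables (T : finType) (e : rel T).

Definition bisimplicial (V : {set T}) u v :=
  {in V &, forall a b, e u a -> e v b -> e a b}.

Lemma bisimplicial_sub (V W : {set T}) u v :
  {in V, forall a, e u a -> a \in W} -> {in V, forall b, e v b -> b \in W} ->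
  bisimplicial W u v -> bisimplicial V u v.
Proof. by move=> uW vW uv a b aV bV ua vb; apply: uv; [apply: uW | apply: vW | |]. Qed.

Lemma mindeg_le (S : {set T}) v : v \in S -> mindeg e S <= deg_in e S v.
Proof. by move=> vS; apply: bigmin_le; rewrite ?mem_index_enum. Qed.

Lemma biclique_of_bisimplicial (S : {set T}) u v : irreflexive e ->
  bisimplicial S u v -> minn (deg_in e S u) (deg_in e S v) <= biclique_number e S.
Proof.
move=> e_irr uv_bis; rewrite /deg_in.
set A := [set x in S | e u x]; set B := [set x in S | e v x].
have [A' A'A cA'] := exists_subset_card (geq_minl #|A| #|B|).
have [B' B'B cB'] := exists_subset_card (geq_minr #|A| #|B|).
have A'_nbr a : a \in A' -> (a \in S) && e u a by move/(subsetP A'A); rewrite inE.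
have B'_nbr b : b \in B' -> (b \in S) && e v b by move/(subsetP B'B); rewrite inE.
suff bc : is_biclique e S A' B'.
  by rewrite -cA'; apply: (bigmax_sup (A', B')).
apply/and5P; split.
- by apply/subsetP => a /A'_nbr/andP[].
- by apply/subsetP => b /B'_nbr/andP[].
- rewrite disjoint_subset; apply/subsetP => x /A'_nbr/andP[xS ux].
  rewrite inE; apply/negP => /B'_nbr/andP[_ vx].
  by move: (uv_bis x x xS xS ux vx); rewrite e_irr.
- by rewrite cA' cB'.
- apply/forall_inP => a /A'_nbr/andP[aS ua]; apply/forall_inP => b /B'_nbr/andP[bS vb].
  exact: uv_bis.
Qed.
End Bisimplicial.

Lemma nth_take_drop (T : Type) (x0 : T) (q : seq T) i j k : i <= j <= size q ->
  nth x0 (take i q ++ drop j q) k =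
  if k < i then nth x0 q k else nth x0 q (j + (k - i)).
Proof.
move=> /andP[ij jq]; rewrite nth_cat size_takel; last exact: leq_trans jq.
by case: ifP => ki; [rewrite nth_take | rewrite nth_drop].
Qed.

Section InnerWalks.
Variables (T : finType) (e : rel T) (D : {set T}) (a b : T).

Definition inner_walk (q : seq T) : Prop :=
  [/\ 0 < size q, nth a q 0 = a, nth a q (size q).-1 = b,
      forall k, k.+1 < size q -> e (nth a q k) (nth a q k.+1) &
      forall k, 0 < k -> k.+1 < size q -> nth a q k \in D].

Lemma inner_walk_cut q i j : inner_walk q -> i.+1 < j < size q ->
  e (nth a q i) (nth a q j) ->
  inner_walk (take i.+1 q ++ drop j q) /\ size (take i.+1 q ++ drop j q) < size q.
Proof.
move=> [q0 qa qb q_adj q_in] /andP[ij jq] chord.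
have ijq : i.+1 <= j <= size q by rewrite (ltnW ij) (ltnW jq).
have nthE k := @nth_take_drop _ a q i.+1 j k ijq.
have size_cut : size (take i.+1 q ++ drop j q) = i.+1 + (size q - j).
  by rewrite size_cat size_takel ?size_drop //; lia.
rewrite size_cut; split; last by lia.
split; rewrite ?size_cut; [| | | move=> k kq | move=> k k0 kq]; rewrite ?nthE //.
- by case: ifP => h; [lia | rewrite -qb; congr nth; lia].
- case: ifP => ki; case: ifP => k1i; try lia.
  + by apply: q_adj; lia.
  + have -> : k = i by lia.
    by rewrite subnn addn0.
  + by rewrite (_ : j + (k.+1 - i.+1) = (j + (k - i.+1)).+1); [apply: q_adj|]; lia.
- by case: ifP => ki; apply: q_in; lia.
Qed.

Lemma chordless_inner_walk q : inner_walk q -> exists2 q', inner_walk q' &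
  forall i j, i < j < size q' -> e (nth a q' i) (nth a q' j) = (j == i.+1).
Proof.
move: {2}(size q) (leqnn (size q)) => n; elim: n q => [|n IHn] q qn q_walk.
  by case: q_walk; lia.
case: (boolP [exists i : 'I_(size q), exists j : 'I_(size q),
                (i.+1 < j) && e (nth a q i) (nth a q j)]).
  case/existsP=> i /existsP[j /andP[ij chord]].
  have ijq : i.+1 < j < size q by rewrite ij ltn_ord.
  have [cut_walk cut_size] := inner_walk_cut q_walk ijq chord.
  by apply: IHn cut_walk; lia.
rewrite negb_exists => /forallP no_chord; exists q => // i j /andP[ij jq].
have [ji | ij1] := eqVneq j i.+1.
  by subst j; case: q_walk => _ _ _ q_adj _; rewrite q_adj.
apply: negbTE; have := no_chord (Ordinal (ltn_trans ij jq)).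
by rewrite negb_exists => /forallP/(_ (Ordinal jq)) /=; rewrite (_ : i.+1 < j); last lia.
Qed.

Lemma inner_walk_of_path p : path e a (rcons p b) -> all (mem D) p ->
  inner_walk (a :: rcons p b).
Proof.
move=> ab_path p_in; split=> //=.
- by rewrite size_rcons /= nth_rcons ltnn eqxx.
- by move/(pathP a): ab_path => ab_adj k; rewrite ltnS; apply: ab_adj.
- move=> [|k] // _; rewrite size_rcons !ltnS => kp.
  by rewrite /= nth_rcons kp; apply: (allP p_in); rewrite mem_nth.
Qed.
End InnerWalks.

(** * Bisimplicial edges in graphs without induced cycles of length other than 4 *)

Section ChordalBipartite.
Variables (T : finType) (e : rel T).
Hypotheses (e_sym : symmetric e) (e_irr : irreflexive e).
Hypothesis no_bad_cycle : forall k, 2 < k -> k != 4 -> ~ has_induced_cycle e k.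

Lemma no_triangle a b c : e a b -> e b c -> e a c -> False.
Proof.
move=> ab bc ac; apply: (no_bad_cycle (k := 3)) => //.
exact: triangle_induced_cycle ab bc ac.
Qed.

Section CommonNeighbour.
Variables (C S : {set T}) (c0 : T).
Hypotheses (c0C : c0 \in C)
  (pair_nbr : forall s t, s \in S -> t \in S -> exists2 c, c \in C & e s c && e t c).

Lemma common_nbr_le2 (R : {set T}) : R \subset S -> #|R| <= 2 ->
  exists2 c, c \in C & {in R, forall s, e c s}.
Proof.
move=> /subsetP R_S; rewrite cardE; have := mem_enum (mem R).
case: (enum R) => [|s [|t [|? ?]]] // memR _.
- by exists c0 => // x; rewrite -memR.
- have sS : s \in S by rewrite R_S // -memR mem_head.
  have [c cC /andP[sc _]] := pair_nbr sS sS.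
  by exists c => // x; rewrite -memR inE => /eqP ->; rewrite e_sym.
- have sS : s \in S by rewrite R_S // -memR mem_head.
  have tS : t \in S by rewrite R_S // -memR !inE eqxx orbT.
  have [c cC /andP[sc tc]] := pair_nbr sS tS.
  by exists c => // x; rewrite -memR !inE => /orP[] /eqP ->; rewrite e_sym.
Qed.

(* By induction, each of three vertices s, t, r of R has a common neighbour of
   the rest of R; if none of them is adjacent to its own vertex, the six form
   an induced 6-cycle. *)
Lemma helly_common_nbr : {in S &, forall s t, ~~ e s t} ->
  forall R : {set T}, R \subset S -> exists2 c, c \in C & {in R, forall s, e c s}.
Proof.
move=> S_indep R; move: {2}#|R| (leqnn #|R|) => n.
elim: n R => [|n IHn] R Rn RS; first by apply: common_nbr_le2; rewrite // (leq_trans Rn).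
have [R_le2 | /card_gt2P[s [t [r [[sR tR rR] [st tr rs]]]]]] := leqP #|R| 2.
  exact: common_nbr_le2.
have nbr_but x : x \in R -> exists2 c, c \in C & {in R :\ x, forall y, e c y}.
  move=> xR; apply: IHn; last exact: subset_trans (subD1set R x) RS.
  by move: Rn; rewrite (cardsD1 x) xR.
have extend c x : c \in C -> {in R :\ x, forall y, e c y} -> e c x ->
    exists2 c', c' \in C & {in R, forall y, e c' y}.
  move=> cC c_adj cx; exists c => // y yR.
  by have [-> //|yx] := eqVneq y x; apply: c_adj; rewrite !inE yx.
have [cs csC cs_adj] := nbr_but s sR.
have [ct ctC ct_adj] := nbr_but t tR.
have [cr crC cr_adj] := nbr_but r rR.
have [cs_s|cs_s] := boolP (e cs s); first exact: extend csC cs_adj cs_s.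
have [ct_t|ct_t] := boolP (e ct t); first exact: extend ctC ct_adj ct_t.
have [cr_r|cr_r] := boolP (e cr r); first exact: extend crC cr_adj cr_r.
have in_but x y : x \in R -> x != y -> x \in R :\ y by move=> xR xy; rewrite !inE xR xy.
have [ct_s ct_r] : e ct s /\ e ct r by split; apply/ct_adj/in_but; rewrite // eq_sym.
have [cs_t cs_r] : e cs t /\ e cs r by split; apply/cs_adj/in_but; rewrite // eq_sym.
have [cr_s cr_t] : e cr s /\ e cr t by split; apply/cr_adj/in_but; rewrite // eq_sym.
have [sS tS rS] : [/\ s \in S, t \in S & r \in S] by split; apply: (subsetP RS).
exfalso; apply: (no_bad_cycle (k := 6)) => //.
apply: (@hexagon_induced_cycle _ _ e_sym e_irr s ct r cs t cr) => //;
  try by [rewrite e_sym | apply: S_indep].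
- by apply/negP => ct_cs; apply: (no_triangle ct_r _ ct_cs); rewrite e_sym.
- by apply/negP => ct_cr; apply: (no_triangle ct_s _ ct_cr); rewrite e_sym.
- by apply/negP => cs_cr; apply: (no_triangle cs_t _ cs_cr); rewrite e_sym.
Qed.
End CommonNeighbour.

Definition far z u := (u != z) && ~~ e z u.

Section FarComponent.
Variables (V : {set T}) (z u0 : T).
Hypotheses (u0V : u0 \in V) (u0_far : far z u0).

Definition far_rel := [rel x y | [&& x \in V, y \in V, far z x, far z y & e x y]].
Definition far_comp := [set y | connect far_rel u0 y].
Definition attach := [set s in V | e z s && [exists c in far_comp, e s c]].

Lemma in_far_comp y : (y \in far_comp) = connect far_rel u0 y.
Proof. by rewrite inE. Qed.

Lemma far_rel_sym : symmetric far_rel.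
Proof. by move=> x y /=; apply/and5P/and5P => -[? ? ? ? ?]; split; rewrite // e_sym. Qed.

Lemma far_comp_in c : c \in far_comp -> (c \in V) && far z c.
Proof.
rewrite in_far_comp => /connectP[p p_path ->].
case/lastP: p p_path => [_|p y]; first by rewrite /= u0V.
by rewrite rcons_path last_rcons => /andP[_ /and5P[_ -> _ -> _]].
Qed.

Lemma far_comp_nbr c a : c \in far_comp -> a \in V -> e c a ->
  (a \in far_comp) || (a \in attach).
Proof.
move=> cC aV ca; have /andP[cV /andP[cz zc]] := far_comp_in cC.
have [za|za] := boolP (e z a).
  by apply/orP; right; rewrite inE aV za; apply/exists_inP; exists c; rewrite // e_sym.
have az : a != z by apply: contraNneq zc => az; rewrite -az e_sym.
apply/orP; left; rewrite !in_far_comp in cC *; apply: connect_trans cC (connect1 _).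
by rewrite /= cV aV /far cz zc az za ca.
Qed.

Lemma attach_indep s t : s \in attach -> t \in attach -> ~~ e s t.
Proof.
move=> /setIdP[_ /andP[zs _]] /setIdP[_ /andP[zt _]].
by apply/negP => st; apply: (no_triangle zs st).
Qed.

Lemma attach_inner_walk s t : s \in attach -> t \in attach ->
  exists q, inner_walk e far_comp s t q.
Proof.
case/setIdP=> _ /andP[_ /exists_inP[c1 c1C sc1]].
case/setIdP=> _ /andP[_ /exists_inP[c2 c2C tc2]].
have /connectP[p p_path c2_last] : connect far_rel c1 c2.
  rewrite !in_far_comp in c1C c2C; apply: connect_trans _ c2C.
  by rewrite (sym_connect_sym far_rel_sym).
exists (s :: rcons (c1 :: p) t); apply: inner_walk_of_path.
  rewrite /= rcons_path sc1 -c2_last e_sym tc2 andbT.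
  by apply: sub_path p_path => x y /and5P[].
apply/allP => y /(path_connect p_path) c1y; rewrite in_far_comp in c1C.
by change (y \in far_comp); rewrite in_far_comp; apply: connect_trans c1C c1y.
Qed.

(* A shortest connection through [far_comp] has length 2: length 1 would
   make a triangle with [z], length at least 3 an induced cycle through [z]
   of length at least 5. *)
Lemma attach_common_nbr s t : s \in attach -> t \in attach ->
  exists2 c, c \in far_comp & e s c && e t c.
Proof.
move=> sA tA; have st_indep := attach_indep sA tA.
have [<- | st] := eqVneq s t.
  by case/setIdP: sA => _ /andP[_ /exists_inP[c cC sc]]; exists c; rewrite ?sc.
have [_ /chordless_inner_walk[q [q0 qs qt q_adj q_in] q_chordless]] := attach_inner_walk sA tA.
have [zs zt] : e z s /\ e z t by case/setIdP: sA => _ /andP[]; case/setIdP: tA => _ /andP[].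
have q_far i : 0 < i -> i.+1 < size q -> far z (nth s q i).
  by move=> i0 iq; case/andP: (far_comp_in (q_in i i0 iq)).
have [q_lt3 | q_gt3 | q3] := ltngtP (size q) 3.
- exfalso; have : size q \in [:: 1; 2] by case: (size q) q0 q_lt3 => [|[|[|]]].
  rewrite !inE => /orP[/eqP q1 | /eqP q2].
    by move: qt st; rewrite q1 qs => ->; rewrite eqxx.
  by move: (q_adj 0) st_indep; rewrite q2 qs -qt q2 => ->.
- exfalso; apply: (no_bad_cycle (k := (size q).+1));
    [exact: ltnW (ltnW q_gt3) | by rewrite eqSS neq_ltn q_gt3 orbT |].
  apply: (induced_cycle_of_chordless_path e_sym e_irr (w := z) (x0 := s)) => // i iq.
  have [-> | i0] := posnP i; first by rewrite qs zs.
  have [-> | il] := eqVneq i (size q).-1; first by rewrite qt zt orbT.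
  have iq1 : i.+1 < size q.
    by rewrite -ltn_predRL ltn_neqAle il -ltnS (ltn_predK iq).
  by case/andP: (q_far i i0 iq1) => _ /negbTE ->.
- exists (nth s q 1); first by apply: q_in; rewrite ?q3.
  by rewrite -{1}qs q_adj ?q3 // e_sym -qt q3 q_adj ?q3.
Qed.
End FarComponent.

Definition far_edge (V : {set T}) z u v :=
  [&& u \in V, v \in V, far z u, far z v & e u v].
Definition has_far_edge (V : {set T}) z := [exists u, exists v, far_edge V z u v].
Definition has_far_bisimplicial_edge (V : {set T}) z :=
  exists u v, far_edge V z u v /\ bisimplicial e V u v.

Lemma far_nbr_neq z u a : far z u -> e u a -> a != z.
Proof. by case/andP=> _ zu; apply: contraTneq => ->; rewrite e_sym. Qed.

Lemma has_far_edgeP V z :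
  reflect (exists u v, far_edge V z u v) (has_far_edge V z).
Proof.
apply: (iffP existsP) => [[u /existsP[v uv]] | [u [v uv]]]; exists u.
  by exists v.
by apply/existsP; exists v.
Qed.

Section Dominated.
Variables (V : {set T}) (z d : T).
Hypotheses (zV : z \in V) (dV : d \in V) (d_far : far z d).
Hypothesis d_dom : {in V, forall b, e z b -> e d b}.
Hypothesis IH : forall (V' : {set T}) z', #|V'| < #|V| -> z' \in V' ->
  has_far_edge V' z' -> has_far_bisimplicial_edge V' z'.

Lemma far_z_of_far_d x : x \in V :\ z -> far d x -> far z x.
Proof.
rewrite !inE => /andP[xz xV] /andP[_ dx]; rewrite /far xz.
by apply: contra dx; apply: d_dom.
Qed.

Lemma dominated_far_from_d :
  has_far_edge (V :\ z) d -> has_far_bisimplicial_edge V z.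
Proof.
move=> /IH[||u [v [/and5P[uVz vVz ud vd uv] uv_bis]]].
- by rewrite (cardsD1 z V) zV.
- by rewrite !inE dV andbT; apply: contraTneq d_far => ->; rewrite /far eqxx.
have [uz vz] := (far_z_of_far_d uVz ud, far_z_of_far_d vVz vd).
move: uVz vVz; rewrite !inE => /andP[_ uV] /andP[_ vV].
exists u, v; split; first by rewrite /far_edge uV vV uz vz uv.
by apply: bisimplicial_sub uv_bis => a aV a_nbr; rewrite !inE aV andbT; apply: far_nbr_neq a_nbr.
Qed.

Lemma dominated_far_from_z : ~~ has_far_edge (V :\ z) d ->
  has_far_edge (V :\ d) z -> has_far_bisimplicial_edge V z.
Proof.
move=> no_d_edge /IH[||u [v [/and5P[uVd vVd uz vz uv] uv_bis]]].
- by rewrite (cardsD1 d V) dV.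
- by rewrite !inE zV andbT eq_sym; case/andP: d_far.
move: uVd vVd; rewrite !inE => /andP[ud uV] /andP[vd vV].
exists u, v; split; first by rewrite /far_edge uV vV uz vz uv.
have d_nbr x y : x \in V -> far z x -> x != d -> ~~ e d x -> e x y ->
    y \in V -> y != d -> e d y.
  move=> xV xz xd dx xy yV yd; apply: contraNT no_d_edge => dy.
  apply/has_far_edgeP; exists x, y; rewrite /far_edge !inE xV yV xy /far xd yd dx dy.
  by case/andP: (xz) => -> _; rewrite (far_nbr_neq xz xy).
move=> a b aV bV ua vb.
have [ad | ad] := eqVneq a d; have [bd | bd] := eqVneq b d; subst.
- by case: (no_triangle uv vb ua).
- apply: d_nbr vb bV bd => //; apply/negP => dv.
  by apply: (no_triangle uv _ ua); rewrite e_sym.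
- rewrite e_sym; apply: d_nbr ua aV ad => //; apply/negP => du.
  by apply: (no_triangle uv vb); rewrite e_sym.
- by apply: uv_bis; rewrite // !inE ?ad ?bd.
Qed.

Lemma dominated_fallback : ~~ has_far_edge (V :\ z) d ->
  ~~ has_far_edge (V :\ d) z -> has_far_edge V z -> has_far_bisimplicial_edge V z.
Proof.
move=> no_d_edge no_z_edge /has_far_edgeP[u0 [v0 /and5P[u0V v0V u0z v0z u0v0]]].
have [w [wV wz dw]] : exists w, [/\ w \in V, far z w & e d w].
  have [u0d | u0d] := eqVneq u0 d; first by exists v0; rewrite -u0d.
  have [v0d | v0d] := eqVneq v0 d; first by exists u0; rewrite -v0d e_sym.
  case/negP: no_z_edge; apply/has_far_edgeP; exists u0, v0.
  by rewrite /far_edge !inE u0d v0d u0V v0V u0z v0z u0v0.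
exists d, w; split; first by rewrite /far_edge dV wV d_far wz dw.
move=> a b aV bV da wb; have [-> | bd] := eqVneq b d; first by rewrite e_sym.
case/negP: no_z_edge; apply/has_far_edgeP; exists w, b.
have wd : w != d by apply/eqP => wd; move: dw; rewrite wd e_irr.
rewrite /far_edge !inE wd bd wV bV wz wb /far (far_nbr_neq wz wb) /=.
by rewrite andbT; apply/negP => zb; apply: (no_triangle dw wb); apply: d_dom.
Qed.

Lemma dominated_far_bisimplicial_edge :
  has_far_edge V z -> has_far_bisimplicial_edge V z.
Proof.
move=> z_edge; have [d_edge | no_d_edge] := boolP (has_far_edge (V :\ z) d).
  exact: dominated_far_from_d.
have [z_edge' | no_z_edge] := boolP (has_far_edge (V :\ d) z).
  exact: dominated_far_from_z.
exact: dominated_fallback.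
Qed.
End Dominated.

Section FarStep.
Variables (V : {set T}) (z u0 v0 : T).
Hypotheses (zV : z \in V) (u0v0_far : far_edge V z u0 v0).
Hypothesis IH : forall (V' : {set T}) z', #|V'| < #|V| -> z' \in V' ->
  has_far_edge V' z' -> has_far_bisimplicial_edge V' z'.

Let C := far_comp V z u0.
Let A := attach V z u0.
Let u0V : u0 \in V. Proof. by case/and5P: u0v0_far. Qed.
Let u0_far : far z u0. Proof. by case/and5P: u0v0_far. Qed.
Let C_far c : c \in C -> (c \in V) && far z c. Proof. exact: far_comp_in. Qed.

Lemma far_step_dominated : V \subset C :|: A :|: [set z] ->
  has_far_bisimplicial_edge V z.
Proof.
move=> VCA; have u0C : u0 \in C by rewrite in_far_comp connect0.
have [d dC d_adj] := helly_common_nbr u0C (attach_common_nbr u0V u0_far)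
  (attach_indep (u0 := u0)) (subxx A).
have /andP[dV d_far] := C_far dC.
apply: (dominated_far_bisimplicial_edge zV dV d_far _ IH) => [b bV zb|].
  apply: d_adj; move/subsetP/(_ b bV): VCA; rewrite !in_setU in_set1.
  case/orP=> [/orP[bC | //] | /eqP bz]; last by move: zb; rewrite bz e_irr.
  by case/andP: (C_far bC) => _ /andP[_ /negP].
by apply/has_far_edgeP; exists u0, v0.
Qed.

(* Neighbours of [C] stay in [C :|: A], so bisimpliciality in the smaller
   graph transfers to [V]. *)
Lemma far_step_shrink : ~~ (V \subset C :|: A :|: [set z]) ->
  has_far_bisimplicial_edge V z.
Proof.
move=> /subsetPn[x xV xV']; set V' := C :|: A :|: [set z] in xV' *.
have /and5P[_ v0V _ v0_far u0v0] := u0v0_far.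
have V'_V : V' \subset V.
  apply/subsetP => y; rewrite !in_setU in_set1.
  by case/orP=> [/orP[/C_far/andP[] | /setIdP[]] | /eqP ->].
have V'_lt : #|V'| < #|V| by rewrite proper_card // properE V'_V; apply/subsetPn; exists x.
have C_V' c : c \in C -> c \in V' by move=> cC; rewrite !in_setU cC.
have far_C y : y \in V' -> far z y -> y \in C.
  rewrite !in_setU in_set1 => /orP[/orP[// | /setIdP[_ /andP[zy _]]] | /eqP ->] /andP[yz zy'].
    by rewrite zy in zy'.
  by rewrite eqxx in yz.
have u0C : u0 \in C by rewrite in_far_comp connect0.
have v0C : v0 \in C by rewrite in_far_comp connect1 //= u0V v0V u0_far v0_far.
have [||u [v [/and5P[uV' vV' uz vz uv] uv_bis]]] := @IH V' z V'_lt.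
- by rewrite !in_setU set11 orbT.
- by apply/has_far_edgeP; exists u0, v0; rewrite /far_edge !C_V' // u0_far v0_far.
have [uC vC] := (far_C u uV' uz, far_C v vV' vz).
exists u, v; split; first by rewrite /far_edge uz vz uv (subsetP V'_V u) ?(subsetP V'_V v).
have C_nbr c a : c \in C -> a \in V -> e c a -> a \in V'.
  move=> cC aV ca; rewrite !in_setU.
  by case/orP: (far_comp_nbr u0V u0_far cC aV ca) => ->; rewrite ?orbT.
by apply: bisimplicial_sub uv_bis => a aV; apply: C_nbr.
Qed.
End FarStep.

Lemma far_bisimplicial_edge (V : {set T}) z :
  z \in V -> has_far_edge V z -> has_far_bisimplicial_edge V z.
Proof.
move: {2}#|V| (leqnn #|V|) => n; elim: n V z => [|n IHn] V z Vn zV.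
  by move: Vn; rewrite (cardsD1 z) zV.
have IH (V' : {set T}) z' : #|V'| < #|V| -> z' \in V' ->
    has_far_edge V' z' -> has_far_bisimplicial_edge V' z'.
  by move=> V'V; apply: IHn; rewrite -ltnS (leq_trans V'V Vn).
move=> /has_far_edgeP[u0 [v0 u0v0_far]].
have [VCA | VCA] := boolP (V \subset far_comp V z u0 :|: attach V z u0 :|: [set z]).
  exact: far_step_dominated zV u0v0_far IH VCA.
exact: far_step_shrink u0v0_far IH VCA.
Qed.

Lemma bisimplicial_edge_exists (S : {set T}) u0 v0 :
  u0 \in S -> v0 \in S -> e u0 v0 ->
  exists u v, [/\ u \in S, v \in S & bisimplicial e S u v].
Proof.
move=> u0S v0S u0v0.
have [/existsP[a /existsP[b /and5P[aS bS u0a v0b ab]]] | no_chord] :=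
  boolP [exists a, exists b, [&& a \in S, b \in S, e u0 a, e v0 b & ~~ e a b]].
  have a_edge : has_far_edge S a.
    have v0a : v0 != a by apply: contraNneq ab => <-.
    have ba : b != a by apply: contraTneq v0b => ->; apply/negP => v0a'; apply: (no_triangle u0v0 v0a' u0a).
    have av0 : ~~ e a v0 by apply/negP => av0; apply: (no_triangle u0a av0 u0v0).
    by apply/has_far_edgeP; exists v0, b; rewrite /far_edge v0S bS v0b /far v0a av0 ba ab.
  have [u [v [/and5P[uS vS _ _ _] uv_bis]]] := far_bisimplicial_edge aS a_edge.
  by exists u, v.
exists u0, v0; split=> // a b aS bS u0a v0b; apply/negPn/negP => ab.
by case/existsP: no_chord; exists a; apply/existsP; exists b; rewrite aS bS u0a v0b.
Qed.
End ChordalBipartite.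

Lemma degree_perfect_of_no_bad_cycle (T : finType) (e : rel T) :
  symmetric e -> irreflexive e ->
  (forall k, 2 < k -> k != 4 -> ~ has_induced_cycle e k) -> degree_perfect e.
Proof.
move=> e_sym e_irr no_bad_cycle S /set0Pn[w wS].
have [/existsP[u0 /existsP[v0 /and3P[u0S v0S u0v0]]] | no_edge] :=
  boolP [exists u, exists v, [&& u \in S, v \in S & e u v]].
  have [u [v [uS vS uv_bis]]] := bisimplicial_edge_exists e_sym e_irr no_bad_cycle u0S v0S u0v0.
  apply: leq_trans (biclique_of_bisimplicial e_irr uv_bis).
  by rewrite leq_min !mindeg_le.
suff w_isolated : deg_in e S w = 0 by rewrite (leq_trans (mindeg_le e wS)) ?w_isolated.
apply/eqP; rewrite cards_eq0; apply/eqP/setP => x; rewrite !inE.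
apply/negbTE/negP => /andP[xS wx].
by case/existsP: no_edge; exists w; apply/existsP; exists x; rewrite wS xS wx.
Qed.

Theorem theorem3p7 (T : finType) (e : rel T) :
  symmetric e -> irreflexive e ->
  (degree_perfect e <->
   forall k : nat, 3 <= k -> k != 4 -> ~ has_induced_cycle e k).
Proof.
move=> e_sym e_irr; split; first exact: no_bad_cycle_of_degree_perfect.
exact: degree_perfect_of_no_bad_cycle.
Qed.
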